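(* Let $A$ be a set of vertices of the path $P_n$ with $2\le |A|\le n$. Then the output of $\textsc{Ascending Local Search}(P_n,W,A)$ is a maximizer of $W$ on $P_n$.
   Context: $P_n$ is the path on vertices $\{1,\dots,n\}$. $W(X)=\sum_{\{u,v\}\subseteq X,u\ne v}d(u,v)$ over unordered pairs, $d$ shortest-path distance; $X$ is a maximizer of $W$ if $W(X)=\max\{W(B):|B|=|X|\}$. A perturbation of $X$ in a graph $G$ is a set $(X\setminus\{u\})\cup\{v\}$ with $u\in X$, $v\in V(G)\setminus X$ and $uv\in E(G)$. $\textsc{Ascending Local Search}(G,F,A)$: set $X=A$; list all perturbations of $X$ in $G$ as $L(0),L(1),\dots$; if $F(L(i))>F(X)$ for some $i$, replace $X$ by $L(j)$ for the least such $j$ and repeat; otherwise (all perturbations satisfy $F(L(i))\le F(X)$) return $X$. *)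

From mathcomp Require Import all_boot.
Set Implicit Arguments. Unset Strict Implicit. Unset Printing Implicit Defensive.

(* The path P_n: vertex i : 'I_n stands for vertex i+1 of {1,...,n}.
   Edges join i and i+1. *)
Definition Padj (n : nat) (u v : 'I_n) : bool := (u.+1 == v :> nat) || (v.+1 == u :> nat).

Definition Pdist (n : nat) (u v : 'I_n) : nat := (u - v) + (v - u).

Definition W (n : nat) (X : {set 'I_n}) : nat :=
  \sum_(u in X) \sum_(v in X | (u < v)%N) Pdist u v.

Definition maximizer (n : nat) (X : {set 'I_n}) : Prop :=
  forall B : {set 'I_n}, #|B| = #|X| -> W B <= W X.

Definition perturbation (n : nat) (X Y : {set 'I_n}) : Prop :=
  exists u v : 'I_n, [/\ u \in X, v \notin X, Padj u v & Y = (X :\ u) :|: [set v]].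

Definition perturbation_listing (n : nat) (L : {set 'I_n} -> seq {set 'I_n}) : Prop :=
  forall X Y, Y \in L X <-> perturbation X Y.

(* One step of Ascending Local Search with objective F: replace X by the first
   L(j) in the listing with F(L(j)) > F(X); if none exists, X is kept. *)
Definition ALS_step (n : nat) (L : {set 'I_n} -> seq {set 'I_n})
  (F : {set 'I_n} -> nat) (X : {set 'I_n}) : {set 'I_n} :=
  nth X (L X) (find (fun Y => F X < F Y) (L X)).

Definition ALS_returns (n : nat) (L : {set 'I_n} -> seq {set 'I_n})
  (F : {set 'I_n} -> nat) (A X : {set 'I_n}) : Prop :=
  exists k, X = iter k (ALS_step L F) A /\ (forall Y, Y \in L X -> F Y <= F X).

From mathcomp Require Import all_boot zify.
Set Implicit Arguments. Unset Strict Implicit. Unset Printing Implicit Defensive.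

(* Every pair of X contributes its distance, i.e. the number of edges between
   its two vertices, so W(X) is the sum over the edges j -- j+1 of P_n of
   c_j * e_j, where c_j (resp. e_j) counts the vertices of X at most j (resp.
   at least j+1).  Since c_j + e_j = |X|, each term is as large as the
   capacities c_j <= j+1 and e_j <= n-j-1 allow once the split is balanced up
   to one.  In a local optimum every edge is balanced in this sense: moving a
   vertex of X across an edge to a free neighbour changes only that edge's
   term, and runs of occupied vertices transport the resulting bound to the
   edges without a free neighbour.  Hence every term, and so W, is maximal. *)

Lemma leq_mul_balanced (c e c' e' : nat) : c + e = c' + e' ->
  (c' < c -> c <= e + 1) -> (c < c' -> e <= c + 1) -> c' * e' <= c * e.
Proof.
move=> hsum hc he; case: (ltngtP c' c) => hcc.
- have [d hd] : exists d, c = c' + d.+1 by exists (c - c'.+1); lia.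
  have -> : e' = e + d.+1 by lia.
  by rewrite hd mulnDr mulnDl leq_add2l mulnC leq_mul2l; lia.
- have [d hd] : exists d, c' = c + d.+1 by exists (c' - c.+1); lia.
  have -> : e = e' + d.+1 by lia.
  by rewrite hd mulnDr mulnDl leq_add2l mulnC leq_mul2r; lia.
- by subst; have -> : e' = e by lia.
Qed.

Lemma leq_of_shifted_mul (a b a' b' : nat) :
  a' = a.+1 -> b'.+1 = b -> a' * b' <= a * b -> b <= a.+1.
Proof. by move=> -> <-; rewrite mulSn mulnS leq_add2r ltnS. Qed.

Lemma sum_ord_range (u v k : nat) : u <= v ->
  \sum_(j < k) ((u <= j) && (j < v)) = minn v k - minn u k.
Proof.
move=> huv; elim: k => [|k IH]; first by rewrite big_ord0 !minn0.
by rewrite big_ord_recr /= IH; case: (leqP u k) => h1; case: (ltnP k v) => h2 /=; lia.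
Qed.

Lemma leq_term_of_sum (I : finType) (F G : I -> nat) (i0 : I) :
  \sum_i F i <= \sum_i G i -> (forall i, i != i0 -> F i = G i) -> F i0 <= G i0.
Proof.
move=> hs he; move: hs; rewrite (bigD1 i0) //= (bigD1 i0 (P := predT)) //=.
by rewrite (eq_bigr _ (fun i (h : i != i0) => he i h)) leq_add2r.
Qed.

Section PathCuts.
Variable m : nat.
Implicit Types X Y B : {set 'I_m.+1}.

Definition below X (j : nat) : nat := \sum_(x in X) (x <= j).
Definition above X (j : nat) : nat := \sum_(x in X) (j <= x).

Lemma W_cut_sum X : W X = \sum_(j < m) below X j * above X j.+1.
Proof.
have dist_cuts (u v : 'I_m.+1) : u < v ->
    Pdist u v = \sum_(j < m) ((u <= j) && (j < v)).
  move=> huv; rewrite sum_ord_range; last exact: ltnW.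
  by have := ltn_ord v; have := ltn_ord u; rewrite /Pdist; lia.
rewrite /W.
under eq_bigr => u _ do (under eq_bigr => v /andP[_ huv] do rewrite (dist_cuts u v huv)).
under eq_bigr => u _ do rewrite exchange_big.
rewrite exchange_big; apply: eq_bigr => j _.
rewrite /below big_distrl; apply: eq_bigr => u _.
rewrite /above big_distrr big_mkcondr /=; apply: eq_bigr => v _.
by case: ifP => huv; case: (leqP u j) => h1; case: (ltnP j v) => h2 /=; lia.
Qed.

Lemma sum_perturb X u v (g : 'I_m.+1 -> nat) : u \in X -> v \notin X ->
  \sum_(x in X :\ u :|: [set v]) g x + g u = \sum_(x in X) g x + g v.
Proof.
move=> hu hv; rewrite setUC big_setU1 /=; last by rewrite in_setD1 (negbTE hv) andbF.
by rewrite (big_setD1 u hu) /=; lia.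
Qed.

Lemma below_perturb X u v i : u \in X -> v \notin X ->
  below (X :\ u :|: [set v]) i + (u <= i) = below X i + (v <= i).
Proof. exact: sum_perturb. Qed.

Lemma above_perturb X u v i : u \in X -> v \notin X ->
  above (X :\ u :|: [set v]) i + (i <= u) = above X i + (i <= v).
Proof. exact: sum_perturb. Qed.

Lemma sum_eq_indicator X i : i <= m -> \sum_(x in X) (x == i :> nat) = (inord i \in X).
Proof.
move=> hi; rewrite (eq_bigr (fun x => nat_of_bool (x == inord i))); last first.
  by move=> x _; rewrite -(inj_eq val_inj) /= inordK.
rewrite big_mkcond (bigD1 (inord i)) //= eqxx big1 ?addn0; first by case: (_ \in X).
by move=> x hx; rewrite (negbTE hx); case: (_ \in X).
Qed.

Lemma below0 X : below X 0 = (inord 0 \in X).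
Proof. by rewrite /below -sum_eq_indicator //; apply: eq_bigr => x _; rewrite leqn0. Qed.

Lemma belowS X j : j < m -> below X j.+1 = below X j + (inord j.+1 \in X).
Proof.
move=> hj; rewrite /below -sum_eq_indicator // -big_split; apply: eq_bigr => x _ /=.
by case: (leqP x j) => h; case: (@eqP nat x j.+1) => h'; case: (leqP x j.+1); lia.
Qed.

Lemma aboveS X j : j <= m -> above X j = above X j.+1 + (inord j \in X).
Proof.
move=> hj; rewrite /above -sum_eq_indicator // -big_split; apply: eq_bigr => x _ /=.
by case: (leqP j x) => h; case: (@eqP nat x j) => h'; case: (leqP j.+1 x); lia.
Qed.

Lemma above_out X : above X m.+1 = 0.
Proof. by rewrite /above big1 // => x _; rewrite leqNgt ltn_ord. Qed.

Lemma below_above_card X j : below X j + above X j.+1 = #|X|.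
Proof.
rewrite /below /above -big_split -sum1_card; apply: eq_bigr => x _ /=.
by case: (leqP x j); lia.
Qed.

Lemma below_le X j : j <= m -> below X j <= j.+1.
Proof.
elim: j => [|j IH] hj; first by rewrite below0; case: (_ \in X).
by rewrite belowS //; have := IH (ltnW hj); case: (_ \in X) => /=; lia.
Qed.

Lemma above_le X j : j <= m.+1 -> above X j <= m.+1 - j.
Proof.
move=> hj; have [d [-> hd]] : exists d, j = m.+1 - d /\ d <= m.+1 by exists (m.+1 - j); lia.
elim: d hd {hj} => [|d IH] hd; first by rewrite subn0 above_out.
rewrite (aboveS _ (_ : m.+1 - d.+1 <= m)); last by lia.
have -> : (m.+1 - d.+1).+1 = m.+1 - d by lia.
by have := IH (ltnW hd); case: (_ \in X) => /=; lia.
Qed.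

Section LocalOptimum.
Variable X : {set 'I_m.+1}.
Hypothesis X_locmax : forall Y, perturbation X Y -> W Y <= W X.

Lemma perturb_cut_product (u v : 'I_m.+1) (j : 'I_m) :
  u \in X -> v \notin X -> Padj u v -> minn u v = j ->
  below (X :\ u :|: [set v]) j * above (X :\ u :|: [set v]) j.+1
    <= below X j * above X j.+1.
Proof.
move=> hu hv huv hj.
have := X_locmax (ex_intro _ u (ex_intro _ v (And4 hu hv huv erefl))).
rewrite !W_cut_sum => /leq_term_of_sum; apply => i /eqP ne_ij.
have {}ne_ij : i <> j :> nat by move=> /val_inj.
have {}huv : u.+1 = v \/ v.+1 = u by case/orP: huv => /eqP; auto.
congr (_ * _); apply/eqP.
- rewrite -(eqn_add2r (u <= i)) below_perturb // (_ : (u <= i) = (v <= i)) //.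
  by apply/idP/idP => ?; lia.
- rewrite -(eqn_add2r (i < u)) above_perturb // (_ : (i < u) = (i < v)) //.
  by apply/idP/idP => ?; lia.
Qed.

Lemma above_le_below_at_free_left j : j < m ->
  inord j.+1 \in X -> inord j \notin X -> above X j.+1 <= below X j + 1.
Proof.
move=> hj hu hv; rewrite addn1.
have hadj : Padj (inord j.+1 : 'I_m.+1) (inord j) by rewrite /Padj !inordK ?eqxx ?orbT //; lia.
have hmin : minn (inord j.+1 : 'I_m.+1) (inord j : 'I_m.+1) = Ordinal hj
  by rewrite /= !inordK //; lia.
have := perturb_cut_product hu hv hadj hmin.
have := below_perturb j hu hv; have := above_perturb j.+1 hu hv.
rewrite !inordK ?leqnn ?ltnn //=; try lia.
(* [set] identifies the two syntactically different copies of the perturbed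
   set, which [lia] would otherwise treat as distinct atoms. *)
set Y := _ :|: _; by move=> hab hbe /leq_of_shifted_mul; apply; lia.
Qed.

Lemma below_le_above_at_free_right j : j < m ->
  inord j \in X -> inord j.+1 \notin X -> below X j <= above X j.+1 + 1.
Proof.
move=> hj hu hv; rewrite addn1.
have hadj : Padj (inord j : 'I_m.+1) (inord j.+1) by rewrite /Padj !inordK ?eqxx //; lia.
have hmin : minn (inord j : 'I_m.+1) (inord j.+1 : 'I_m.+1) = Ordinal hj
  by rewrite /= !inordK //; lia.
have := perturb_cut_product hu hv hadj hmin.
have := below_perturb j hu hv; have := above_perturb j.+1 hu hv.
rewrite !inordK ?leqnn ?ltnn //=; try lia.
set Y := _ :|: _; move=> hab hbe.
by rewrite mulnC [X in _ <= X]mulnC => /leq_of_shifted_mul; apply; lia.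
Qed.

Lemma above_le_below_at_free j : j <= m ->
  inord j \notin X -> above X j.+1 <= below X j + 1.
Proof.
move=> hj; have [d hd] : exists d, j + d = m by exists (m - j); lia.
elim: d j hd {hj} => [|d IH] j hd hv.
  by move: hd; rewrite addn0 => ->; rewrite above_out.
have hjm : j < m by lia.
case: (boolP (inord j.+1 \in X)) => hin; first exact: above_le_below_at_free_left.
have := IH j.+1 (etrans (addSnnS j d) hd) hin.
by rewrite (aboveS _ hjm) (belowS _ hjm) (negbTE hin) !addn0.
Qed.

Lemma below_le_above_at_free j : j <= m ->
  inord j \notin X -> below X j <= above X j.+1 + 1.
Proof.
elim: j => [|j IH] hj hv; first by rewrite below0 (negbTE hv).
have := aboveS X hj; have := belowS X hj; rewrite (negbTE hv) !addn0 => -> <-.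
case: (boolP (inord j \in X)) => hin; first exact: below_le_above_at_free_right.
exact: IH (ltnW hj) hin.
Qed.

Lemma above_le_below_nonfull j : j <= m -> below X j < j.+1 ->
  above X j.+1 <= below X j + 1.
Proof.
elim: j => [|j IH] hj hc.
  by apply: above_le_below_at_free => //; move: hc; rewrite below0; case: (_ \in X).
case: (boolP (inord j.+1 \in X)) => hin; last exact: above_le_below_at_free.
have := IH (ltnW hj); move: hc.
by rewrite (belowS _ hj) (aboveS _ hj) hin; lia.
Qed.

Lemma below_le_above_nonfull j : j <= m -> above X j.+1 < m - j ->
  below X j <= above X j.+1 + 1.
Proof.
move=> hj; have [d hd] : exists d, j + d = m by exists (m - j); lia.
elim: d j hd {hj} => [|d IH] j hd he.
  by move: he; rewrite -hd addn0 subnn.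
have hjm : j < m by lia.
have := aboveS X hjm; have := belowS X hjm.
case: (boolP (inord j.+1 \in X)) => hin /= hb ha.
  by have := IH j.+1 (etrans (addSnnS j d) hd); lia.
by have := below_le_above_at_free hjm hin; lia.
Qed.

Lemma cut_product_le_locmax B : #|B| = #|X| ->
  forall i : 'I_m, below B i * above B i.+1 <= below X i * above X i.+1.
Proof.
move=> hB i; have hi := ltn_ord i.
have := below_above_card X i; have := below_above_card B i.
have := below_le B (ltnW hi); have := above_le B (ltnW (hi : i.+1 < m.+1)).
have := above_le X (ltnW (hi : i.+1 < m.+1)) => aboveX aboveB belowB cardB cardX.
apply: leq_mul_balanced; first lia.
- move=> hlt; apply: below_le_above_nonfull (ltnW hi) _; lia.
- move=> hlt; apply: above_le_below_nonfull (ltnW hi) _; lia.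
Qed.

End LocalOptimum.
End PathCuts.

Theorem mainTheorem12 (n : nat) (A : {set 'I_n})
  (L : {set 'I_n} -> seq {set 'I_n}) :
  perturbation_listing L -> 2 <= #|A| <= n ->
  forall X : {set 'I_n}, ALS_returns L (@W n) A X -> maximizer X.
Proof.
case: n A L => [|m] A L hL hA X [_ [_ X_final]] B hB.
  by case/andP: hA => /leq_trans h /h.
have X_locmax Y : perturbation X Y -> W Y <= W X by move/hL; exact: X_final.
rewrite !W_cut_sum; apply: leq_sum => i _.
exact: cut_product_le_locmax.
Qed.
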